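(* Let $k,c_1$ be real constants and let $F_2,F_3,N$ be smooth functions of $\theta$ on an interval satisfying $$N''+N=3F_3',\quad kN=(3F_2-c_1)F_2',\quad 2NF_2=(3F_2-c_1)F_3'+N'F_2',\quad 3NF_3=N'F_3'$$ (primes denote $d/d\theta$). In polar coordinates $x=r\cos\theta$, $y=r\sin\theta$ ($r>0$, $\theta$ in that interval), let $$V=\frac kr+\frac{F_2(\theta)}{r^2}+\frac{F_3(\theta)}{r^3}.$$ Then $$J=p_\theta^3+N(\theta)p_r+\Big(\frac1rN'(\theta)+3F_2(\theta)-c_1\Big)p_\theta$$ is a first integral of $\ddot x=-V_{,x}$, $\ddot y=-V_{,y}$, where $p_r=\dot r$ and $p_\theta=r^2\dot\theta=x\dot y-y\dot x$.
   Context: A first integral is a function of $(t,x,y,\dot x,\dot y)$ whose total time derivative vanishes along every solution of the given equations of motion. *)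

From Stdlib Require Import Reals.
From Coquelicot Require Import Coquelicot.
Open Scope R_scope.

Definition in_oint (a b : Rbar) (t : R) : Prop := Rbar_lt a t /\ Rbar_lt t b.

Definition smooth_on (a b : Rbar) (f : R -> R) : Prop :=
  forall n t, in_oint a b t -> ex_derive (Derive_n f n) t.

(* The potential V = k/r + F2(theta)/r^2 + F3(theta)/r^3 written as a function
   of Cartesian (x,y) near a point whose polar angle is th0: the angle theta is
   the continuous branch th0 + atan(v/u), where (u,v) are the coordinates of
   (x,y) rotated by -th0 (so theta = th0 exactly at the ray of angle th0). *)
Definition Vpot (k : R) (F2 F3 : R -> R) (th0 x y : R) : R :=
  let rho := sqrt (x ^ 2 + y ^ 2) in
  let u := x * cos th0 + y * sin th0 in
  let v := - x * sin th0 + y * cos th0 in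
  let th := th0 + atan (v / u) in
  k / rho + F2 th / rho ^ 2 + F3 th / rho ^ 3.

Definition Vx (k : R) (F2 F3 : R -> R) (r th : R) : R :=
  Derive (fun X => Vpot k F2 F3 th X (r * sin th)) (r * cos th).
Definition Vy (k : R) (F2 F3 : R -> R) (r th : R) : R :=
  Derive (fun Y => Vpot k F2 F3 th (r * cos th) Y) (r * sin th).

Definition Jtraj (c1 : R) (F2 N : R -> R) (r th : R -> R) (t : R) : R :=
  let pr := Derive r t in
  let pth := r t ^ 2 * Derive th t in
  pth ^ 3 + N (th t) * pr + (/ r t * Derive N (th t) + 3 * F2 (th t) - c1) * pth.

From Stdlib Require Import Reals Lra.
From Coquelicot Require Import Coquelicot.
Open Scope R_scope.

(* In polar coordinates Newton's equations read
   r'' = r th'^2 - V_r  and  (r^2 th')' = - V_th,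
   with V_r, V_th the polar partial derivatives of V.  Substituting these into
   the time derivative of J leaves
   (k N - (3F2 - c1) F2') / r^2 + (2 N F2 - (3F2 - c1) F3' - N' F2') / r^3
     + (3 N F3 - N' F3') / r^4
   once N'' is eliminated by N'' + N = 3 F3'; the three numerators vanish by
   the remaining hypotheses. *)

Ltac eta_R :=
  repeat match goal with
  | |- context [fun x : R => ?f x] => progress change (fun x : R => f x) with f
  end.

Lemma sin_cos_sqr_sum x : sin x * sin x + cos x * cos x = 1.
Proof. generalize (sin2_cos2 x); unfold Rsqr; lra. Qed.

Definition dV_dr (k : R) (F2 F3 : R -> R) (r th : R) : R :=
  - k / r ^ 2 - 2 * F2 th / r ^ 3 - 3 * F3 th / r ^ 4.

Definition dV_dth (F2 F3 : R -> R) (r th : R) : R :=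
  Derive F2 th / r ^ 2 + Derive F3 th / r ^ 3.

(* On the ray of angle th0 the chart of [Vpot] has u = r, v = 0, hence
   angle th0 + atan 0 = th0. *)
Ltac polar_chart_simpl r th0 :=
  assert (Hrr : r * cos th0 * (r * cos th0 * 1) + r * sin th0 * (r * sin th0 * 1) = r * r)
    by (transitivity (r * r * (sin th0 * sin th0 + cos th0 * cos th0));
        [ring | rewrite sin_cos_sqr_sum; ring]);
  assert (Hv : - (r * cos th0) * sin th0 + r * sin th0 * cos th0 = 0) by ring;
  assert (Hu : r * cos th0 * cos th0 + r * sin th0 * sin th0 = r)
    by (transitivity (r * (sin th0 * sin th0 + cos th0 * cos th0));
        [ring | rewrite sin_cos_sqr_sum; ring]);
  assert (Hatan : atan (0 * / r) = 0) by (rewrite Rmult_0_l; apply atan_0);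
  rewrite ?Hrr, ?Hv, ?Hu, ?sqrt_square, ?Hatan, ?Rplus_0_r by lra.

Lemma Vx_polar k F2 F3 r th0 : 0 < r -> ex_derive F2 th0 -> ex_derive F3 th0 ->
  Vx k F2 F3 r th0 = cos th0 * dV_dr k F2 F3 r th0 - sin th0 * dV_dth F2 F3 r th0 / r.
Proof.
intros r_pos dF2 dF3; unfold Vx, Vpot, dV_dr, dV_dth; apply is_derive_unique.
auto_derive; polar_chart_simpl r th0.
- repeat split; auto; try nra;
    apply Rgt_not_eq, Rlt_gt; repeat apply Rmult_lt_0_compat; lra.
- eta_R; field; lra.
Qed.

Lemma Vy_polar k F2 F3 r th0 : 0 < r -> ex_derive F2 th0 -> ex_derive F3 th0 ->
  Vy k F2 F3 r th0 = sin th0 * dV_dr k F2 F3 r th0 + cos th0 * dV_dth F2 F3 r th0 / r.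
Proof.
intros r_pos dF2 dF3; unfold Vy, Vpot, dV_dr, dV_dth; apply is_derive_unique.
auto_derive; polar_chart_simpl r th0.
- repeat split; auto; try nra;
    apply Rgt_not_eq, Rlt_gt; repeat apply Rmult_lt_0_compat; lra.
- eta_R; field; lra.
Qed.

Section PolarAcceleration.

Variables (r th : R -> R) (t : R).
Hypothesis near_t : locally t (fun s => ex_derive r s /\ ex_derive th s).
Hypotheses (ddr : ex_derive (Derive r) t) (ddth : ex_derive (Derive th) t).

Lemma Derive2_polar_x :
  Derive (Derive (fun s => r s * cos (th s))) t =
  Derive (Derive r) t * cos (th t) - 2 * Derive r t * sin (th t) * Derive th t
  - r t * cos (th t) * Derive th t ^ 2 - r t * sin (th t) * Derive (Derive th) t.
Proof.
rewrite (Derive_ext_loc _ (fun s => Derive r s * cos (th s) - r s * sin (th s) * Derive th s)).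
- apply is_derive_unique; destruct (locally_singleton _ _ near_t) as [dr dth].
  auto_derive; eta_R; [repeat split; auto | ring].
- apply (filter_imp (fun s => ex_derive r s /\ ex_derive th s)); [| exact near_t].
  intros s [dr dth].
  apply is_derive_unique; auto_derive; eta_R; [repeat split; auto | ring].
Qed.

Lemma Derive2_polar_y :
  Derive (Derive (fun s => r s * sin (th s))) t =
  Derive (Derive r) t * sin (th t) + 2 * Derive r t * cos (th t) * Derive th t
  - r t * sin (th t) * Derive th t ^ 2 + r t * cos (th t) * Derive (Derive th) t.
Proof.
rewrite (Derive_ext_loc _ (fun s => Derive r s * sin (th s) + r s * cos (th s) * Derive th s)).
- apply is_derive_unique; destruct (locally_singleton _ _ near_t) as [dr dth].
  auto_derive; eta_R; [repeat split; auto | ring].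
- apply (filter_imp (fun s => ex_derive r s /\ ex_derive th s)); [| exact near_t].
  intros s [dr dth].
  apply is_derive_unique; auto_derive; eta_R; [repeat split; auto | ring].
Qed.

End PolarAcceleration.

(* The Cartesian equations are the polar ones rotated by the angle th; undoing
   the rotation (multiplying by (c, s) and (-s, c)) separates them. *)
Lemma newton_polar (r r1 r2 th1 th2 Vr Vth c s : R) : r <> 0 -> s * s + c * c = 1 ->
  r2 * c - 2 * r1 * s * th1 - r * c * th1 ^ 2 - r * s * th2 = - (c * Vr - s * Vth / r) ->
  r2 * s + 2 * r1 * c * th1 - r * s * th1 ^ 2 + r * c * th2 = - (s * Vr + c * Vth / r) ->
  r2 = r * th1 ^ 2 - Vr /\ th2 = (- Vth / r - 2 * r1 * th1) / r.
Proof.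
intros r_nz sc eqx eqy.
assert (radial : (r2 - r * th1 ^ 2 + Vr) * (s * s + c * c) =
  c * ((r2 * c - 2 * r1 * s * th1 - r * c * th1 ^ 2 - r * s * th2) - - (c * Vr - s * Vth / r))
  + s * ((r2 * s + 2 * r1 * c * th1 - r * s * th1 ^ 2 + r * c * th2) - - (s * Vr + c * Vth / r))
  ) by (field; exact r_nz).
assert (angular : (r * th2 + Vth / r + 2 * r1 * th1) * (s * s + c * c) =
  - s * ((r2 * c - 2 * r1 * s * th1 - r * c * th1 ^ 2 - r * s * th2) - - (c * Vr - s * Vth / r))
  + c * ((r2 * s + 2 * r1 * c * th1 - r * s * th1 ^ 2 + r * c * th2) - - (s * Vr + c * Vth / r))
  ) by (field; exact r_nz).
rewrite eqx, eqy, sc, !Rminus_diag in radial, angular.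
split; [lra |].
apply (Rmult_eq_reg_l r); [| exact r_nz].
replace (r * ((- Vth / r - 2 * r1 * th1) / r)) with (- Vth / r - 2 * r1 * th1) by (field; exact r_nz).
lra.
Qed.

Lemma Jtraj_stationary k c1 F2 F3 N (r th : R -> R) t :
  ex_derive r t -> ex_derive (Derive r) t -> ex_derive th t -> ex_derive (Derive th) t ->
  ex_derive F2 (th t) -> ex_derive N (th t) -> ex_derive (Derive N) (th t) -> 0 < r t ->
  Derive (Derive r) t = r t * Derive th t ^ 2 - dV_dr k F2 F3 (r t) (th t) ->
  Derive (Derive th) t =
    (- dV_dth F2 F3 (r t) (th t) / r t - 2 * Derive r t * Derive th t) / r t ->
  Derive (Derive N) (th t) + N (th t) = 3 * Derive F3 (th t) ->
  k * N (th t) = (3 * F2 (th t) - c1) * Derive F2 (th t) ->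
  2 * N (th t) * F2 (th t) =
    (3 * F2 (th t) - c1) * Derive F3 (th t) + Derive N (th t) * Derive F2 (th t) ->
  3 * N (th t) * F3 (th t) = Derive N (th t) * Derive F3 (th t) ->
  is_derive (Jtraj c1 F2 N r th) t 0.
Proof.
intros dr ddr dth ddth dF2 dN ddN r_pos radial angular e1 e2 e3 e4.
assert (ddN_eq : Derive (Derive N) (th t) = 3 * Derive F3 (th t) - N (th t)) by lra.
unfold Jtraj; cbv zeta; auto_derive; eta_R; [repeat split; auto; lra |].
rewrite radial, angular, ddN_eq; unfold dV_dr, dV_dth.
transitivity ((k * N (th t) - (3 * F2 (th t) - c1) * Derive F2 (th t)) / r t ^ 2
  + (2 * N (th t) * F2 (th t)
     - ((3 * F2 (th t) - c1) * Derive F3 (th t) + Derive N (th t) * Derive F2 (th t))) / r t ^ 3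
  + (3 * N (th t) * F3 (th t) - Derive N (th t) * Derive F3 (th t)) / r t ^ 4).
- field; lra.
- rewrite e2, e3, e4, !Rminus_diag; field; lra.
Qed.

Theorem mainTheorem9 (k c1 : R) (a b : Rbar) (F2 F3 N : R -> R)
  (hF2 : smooth_on a b F2) (hF3 : smooth_on a b F3) (hN : smooth_on a b N)
  (e1 : forall th, in_oint a b th ->
     Derive (Derive N) th + N th = 3 * Derive F3 th)
  (e2 : forall th, in_oint a b th ->
     k * N th = (3 * F2 th - c1) * Derive F2 th)
  (e3 : forall th, in_oint a b th ->
     2 * N th * F2 th = (3 * F2 th - c1) * Derive F3 th + Derive N th * Derive F2 th)
  (e4 : forall th, in_oint a b th ->
     3 * N th * F3 th = Derive N th * Derive F3 th)
  (ta tb : Rbar) (r th : R -> R)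
  (hr : forall t, in_oint ta tb t -> ex_derive r t /\ ex_derive (Derive r) t)
  (hth : forall t, in_oint ta tb t -> ex_derive th t /\ ex_derive (Derive th) t)
  (rpos : forall t, in_oint ta tb t -> 0 < r t)
  (thI : forall t, in_oint ta tb t -> in_oint a b (th t))
  (motx : forall t, in_oint ta tb t ->
     Derive (Derive (fun s => r s * cos (th s))) t = - Vx k F2 F3 (r t) (th t))
  (moty : forall t, in_oint ta tb t ->
     Derive (Derive (fun s => r s * sin (th s))) t = - Vy k F2 F3 (r t) (th t)) :
  forall t, in_oint ta tb t -> is_derive (Jtraj c1 F2 N r th) t 0.
Proof.
intros t Ht.
assert (near_t : locally t (fun s => ex_derive r s /\ ex_derive th s)).
{ destruct Ht as [ta_t t_tb].
  apply (filter_imp (in_oint ta tb)).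
  - intros s Hs; split; [apply (hr s Hs) | apply (hth s Hs)].
  - apply (locally_interval _ _ ta tb); auto; intros; split; auto. }
destruct (hr t Ht) as [dr ddr]; destruct (hth t Ht) as [dth ddth].
pose proof (thI t Ht) as Hi; pose proof (rpos t Ht) as r_pos.
pose proof (hF2 0%nat _ Hi) as dF2; pose proof (hF3 0%nat _ Hi) as dF3.
pose proof (motx t Ht) as mx; pose proof (moty t Ht) as my.
rewrite Derive2_polar_x, Vx_polar in mx by auto.
rewrite Derive2_polar_y, Vy_polar in my by auto.
destruct (newton_polar _ _ _ _ _ _ _ _ _ (Rgt_not_eq _ _ r_pos) (sin_cos_sqr_sum _) mx my)
  as [radial angular].
apply (Jtraj_stationary k c1 F2 F3); auto.
- exact (hN 0%nat _ Hi).
- exact (hN 1%nat _ Hi).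
Qed.
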